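(* For every finite nonempty subset $C \subset \mathbb N_{\ge 2}$ there is a finitely generated Krull monoid $H$ with finite class group such that $\mathcal R(H) = \operatorname{Ca}(H) = C$ and $\daleth^*(H) = C\setminus\{2\}$.
   Context: A monoid is a commutative cancellative semigroup with identity; $\mathcal A(H)$ denotes its atoms, $H_{\mathrm{red}}=H/H^\times$. For $a\in H$, $\mathsf Z(a)$ is the set of factorizations of $a$ (elements of the free abelian monoid on $\mathcal A(H_{\mathrm{red}})$ multiplying to $aH^\times$), $|z|$ is the number of atoms in $z$, and $\mathsf L(a)=\{|z|: z\in\mathsf Z(a)\}$. $\daleth^*(H) = \{\min(\mathsf L(uv)\setminus\{2\}) : u,v \in \mathcal A(H),\ |\mathsf L(uv)|>1\}$. Distance: writing $z = u_1\cdots u_k v_1\cdots v_\ell$, $z'=u_1\cdots u_k w_1\cdots w_m$ with no $v_i$ equal to any $w_j$, $\mathsf d(z,z')=\max\{\ell,m\}$. An $N$-chain from $z$ to $z'$ in $\mathsf Z(a)$ is a sequence $z=z_0,\dots,z_n=z'$ in $\mathsf Z(a)$ with $\mathsf d(z_{i-1},z_i)\le N$. $\mathsf c(a)$ is the least $N$ such that any two factorizations of $a$ are connected by an $N$-chain; $\operatorname{Ca}(H)=\{\mathsf c(a): a\in H,\ |\mathsf Z(a)|>1\}$. $\mathcal R(H)$ is the set of $d\in\mathbb N_{\ge2}$ such that some $a\in H$ has distinct $z,z'\in\mathsf Z(a)$ with $\mathsf d(z,z')=d$ not connected by any $(d-1)$-chain. A Krull monoid is a monoid $H$ admitting a divisor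 theory $H_{\mathrm{red}}\hookrightarrow\mathcal F(P)$ into a free abelian monoid (a divisor homomorphism such that every element of $\mathcal F(P)$ is a gcd of finitely many elements of $H_{\mathrm{red}}$); its class group is $\mathsf q(\mathcal F(P))/\mathsf q(H_{\mathrm{red}})$. *)

From Stdlib Require Import List Permutation Arith.
Import ListNotations.

Record CMon : Type := {
  car :> Type;
  mop : car -> car -> car;
  mone : car;
  mop_assoc : forall a b c, mop a (mop b c) = mop (mop a b) c;
  mop_comm : forall a b, mop a b = mop b a;
  mop_one : forall a, mop mone a = a;
  mop_cancel : forall a b c, mop a b = mop a c -> b = c }.

Definition is_unit (H : CMon) (u : H) : Prop := exists v, mop H u v = mone H.

Definition associated (H : CMon) (a b : H) : Prop :=
  exists e, is_unit H e /\ a = mop H e b.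

Definition mdivides (H : CMon) (a b : H) : Prop := exists c, b = mop H a c.

Definition atom (H : CMon) (u : H) : Prop :=
  ~ is_unit H u /\ forall a b, u = mop H a b -> is_unit H a \/ is_unit H b.

Definition mprod (H : CMon) (l : list H) : H := fold_right (mop H) (mone H) l.

(* An element of the free abelian monoid on A(H_red) is represented by a
   list of atoms of H (representatives of their classes); two lists
   represent the same element iff they agree up to order and associates. *)
Definition fsame (H : CMon) (z z' : list H) : Prop :=
  exists z'', Permutation z' z'' /\ Forall2 (associated H) z z''.

Definition factorization (H : CMon) (a : H) (z : list H) : Prop :=
  Forall (atom H) z /\ associated H (mprod H z) a.

Definition in_L (H : CMon) (a : H) (n : nat) : Prop :=
  exists z, factorization H a z /\ length z = n.

Definition dist (H : CMon) (z z' : list H) (n : nat) : Prop :=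
  exists x y y', fsame H z (x ++ y) /\ fsame H z' (x ++ y') /\
    (forall v w, In v y -> In w y' -> ~ associated H v w) /\
    n = Nat.max (length y) (length y').

Inductive chain (H : CMon) (a : H) (N : nat) : list H -> list H -> Prop :=
| chain_refl : forall z, chain H a N z z
| chain_step : forall z y w, chain H a N z y -> factorization H a w ->
    (exists n, dist H y w n /\ n <= N) -> chain H a N z w.

Definition catenary_degree (H : CMon) (a : H) (N : nat) : Prop :=
  (forall z z', factorization H a z -> factorization H a z' -> chain H a N z z') /\
  (forall M, (forall z z', factorization H a z -> factorization H a z' ->
                chain H a M z z') -> N <= M).

Definition in_Ca (H : CMon) (N : nat) : Prop :=
  exists a, (exists z z', factorization H a z /\ factorization H a z' /\ ~ fsame H z z')
    /\ catenary_degree H a N.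

Definition in_R (H : CMon) (d : nat) : Prop :=
  2 <= d /\ exists a z z', factorization H a z /\ factorization H a z' /\
    ~ fsame H z z' /\ dist H z z' d /\ ~ chain H a (d - 1) z z'.

Definition in_daleth_star (H : CMon) (m : nat) : Prop :=
  exists u v, atom H u /\ atom H v /\
    (exists l1 l2, in_L H (mop H u v) l1 /\ in_L H (mop H u v) l2 /\ l1 <> l2) /\
    in_L H (mop H u v) m /\ m <> 2 /\
    (forall l, in_L H (mop H u v) l -> l <> 2 -> m <= l).

Definition finitely_generated (H : CMon) : Prop :=
  exists gs : list H, forall a, exists l, Forall (fun x => In x gs) l /\ a = mprod H l.

(* Free abelian monoid F(P): finitely supported functions P -> nat. *)
Definition fin_supp {P : Type} (f : P -> nat) : Prop :=
  exists l : list P, forall p, f p <> 0 -> In p l.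

(* phi : H -> F(P) induces a divisor theory H_red -> F(P). *)
Definition divisor_theory (H : CMon) (P : Type) (phi : H -> P -> nat) : Prop :=
  (forall a, fin_supp (phi a)) /\
  (forall p, phi (mone H) p = 0) /\
  (forall a b p, phi (mop H a b) p = phi a p + phi b p) /\
  (forall a b, (forall p, phi a p <= phi b p) -> mdivides H a b) /\
  (* every element of F(P) is a gcd of finitely many elements of the image *)
  (forall f : P -> nat, fin_supp f -> exists l : list H, l <> [] /\
     (forall a, In a l -> forall p, f p <= phi a p) /\
     (forall g : P -> nat, fin_supp g ->
        (forall a, In a l -> forall p, g p <= phi a p) -> forall p, g p <= f p)).

(* The class group q(F(P)) / q(phi(H)) is finite: elements of q(F(P)) are
   differences f - g, and f - g ~ r1 - r2 iff their difference is
   phi(a) - phi(b) for some a, b in H. *)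
Definition class_group_finite (H : CMon) (P : Type) (phi : H -> P -> nat) : Prop :=
  exists reps : list ((P -> nat) * (P -> nat)),
    Forall (fun r => fin_supp (fst r) /\ fin_supp (snd r)) reps /\
    forall f g : P -> nat, fin_supp f -> fin_supp g ->
      exists r, In r reps /\ exists a b : H,
        forall p, f p + snd r p + phi b p = fst r p + g p + phi a p.

Definition krull_finite_class_group (H : CMon) : Prop :=
  exists (P : Type) (phi : H -> P -> nat),
    divisor_theory H P phi /\ class_group_finite H P phi.

(* Take [H] to be the product, over [d] in [C], of the block monoids
   [H_d = {(a,b) in N^2 | a = b mod d}]. Each block has exactly three atoms [u = (d,0)],
   [v = (0,d)], [w = (1,1)] and the single relation [u v = w^d], so a factorization is
   determined by its [w]-counts, and two factorizations of one element have [w]-counts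
   differing by multiples of [d] in block [d]. Any step changing a [w]-count in block [d] has
   distance at least [d], while the exchange [u v <-> w^d] has distance exactly [d]; hence two
   factorizations are joined by an [N]-chain iff [d <= N] for every block in which they differ.
   This gives [R(H) = Ca(H) = C], witnessed by [u v] with its factorizations [u v] and [w^d].
   These [u v] are also the only products of two atoms with a factorization of length other
   than 2, namely [w^d], whence [daleth*(H) = C \ {2}]. Finally [H] is cut out of [N^(2|C|)] by
   congruences, so the inclusion is a divisor theory with class group [prod_(d in C) Z/d]. *)

From Stdlib Require Import List Arith Lia Permutation.
From Stdlib Require Import FunctionalExtensionality ProofIrrelevance Classical ClassicalEpsilon.
Import ListNotations.

Lemma count_occ_split {A} (eq_dec : forall x y : A, {x = y} + {x <> y}) (Y z : list A) :
  (forall x, count_occ eq_dec Y x <= count_occ eq_dec z x) ->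
  exists rest, Permutation z (Y ++ rest).
Proof.
  revert z; induction Y as [|y Y IH]; intros z Hle; [now exists z|].
  assert (Hin : In y z).
  { apply (count_occ_In eq_dec); specialize (Hle y).
    rewrite count_occ_cons_eq in Hle; [lia | reflexivity]. }
  apply in_split in Hin as [l1 [l2 ->]].
  destruct (IH (l1 ++ l2)) as [rest Hrest].
  { intros x; specialize (Hle x); destruct (eq_dec y x) as [<-|Hne].
    - rewrite count_occ_cons_eq, count_occ_elt_eq in Hle; auto; lia.
    - rewrite count_occ_cons_neq, count_occ_elt_neq in Hle; auto. }
  exists rest; simpl; rewrite <- Hrest; symmetry; apply Permutation_middle.
Qed.

Section Monoid.
Variable H : CMon.

Lemma mprod_app (l1 l2 : list H) : mprod H (l1 ++ l2) = mop H (mprod H l1) (mprod H l2).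
Proof.
  induction l1 as [|x l1 IH]; simpl.
  - now rewrite mop_one.
  - now rewrite IH, mop_assoc.
Qed.

Lemma mprod_perm (l1 l2 : list H) : Permutation l1 l2 -> mprod H l1 = mprod H l2.
Proof.
  induction 1; simpl; try congruence.
  now rewrite !mop_assoc, (mop_comm H y x).
Qed.

Lemma associated_refl (x : H) : associated H x x.
Proof. exists (mone H); split; [exists (mone H)|]; now rewrite mop_one. Qed.

Lemma fsame_perm (z z' : list H) : Permutation z' z -> fsame H z z'.
Proof.
  intros Hp; exists z; split; [exact Hp|]; clear Hp.
  induction z; constructor; auto using associated_refl.
Qed.

Lemma chain_trans a N z y w : chain H a N z y -> chain H a N y w -> chain H a N z w.
Proof. intros Hzy Hyw; induction Hyw; [assumption | apply chain_step with y; auto]. Qed.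

Lemma chain_factorization a N z w :
  chain H a N z w -> factorization H a z -> factorization H a w.
Proof. induction 1; auto. Qed.

Lemma chain_single a N y w n :
  factorization H a w -> dist H y w n -> n <= N -> chain H a N y w.
Proof. intros; eapply chain_step; [apply chain_refl | eauto | eauto]. Qed.

Lemma dist_perm (y w : list H) : Permutation y w -> dist H y w 0.
Proof.
  intros P; exists w, [], []; rewrite !app_nil_r.
  repeat split; [apply fsame_perm, Permutation_sym, P | apply fsame_perm; reflexivity |].
  now intros v u [].
Qed.

Lemma chain_gap {T} (f : list H -> T) B a N z w :
  (forall y y' n, factorization H a y -> factorization H a y' -> dist H y y' n ->
     f y <> f y' -> B <= n) ->
  chain H a N z w -> factorization H a z -> f z <> f w -> B <= N.
Proof.
  intros Hstep Hch; induction Hch as [|z y w Hch IH Fw [n [Hd Hn]]]; intros Fz Hne.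
  - congruence.
  - destruct (classic (f z = f y)) as [E|E]; [|now apply IH].
    rewrite E in Hne.
    enough (B <= n) by lia.
    apply (Hstep y w n); eauto using chain_factorization.
Qed.

Lemma factorization_exchange a z Y Y' rest :
  factorization H a z -> Permutation z (Y ++ rest) -> Forall (atom H) Y' ->
  mprod H Y = mprod H Y' -> (forall v w, In v Y -> In w Y' -> ~ associated H v w) ->
  factorization H a (Y' ++ rest) /\ dist H z (Y' ++ rest) (Nat.max (length Y) (length Y')).
Proof.
  intros [Az Pz] Hperm AY' EY Hdisj; split.
  - split.
    + apply Forall_app; split; [assumption|].
      rewrite Forall_forall in Az |- *; intros x Hx; apply Az.
      apply (Permutation_in x (Permutation_sym Hperm)), in_or_app; auto.
    + now rewrite mprod_app, <- EY, <- mprod_app, <- (mprod_perm _ _ Hperm).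
  - exists rest, Y, Y'; repeat split; auto; apply fsame_perm.
    + rewrite Hperm; apply Permutation_app_comm.
    + apply Permutation_app_comm.
Qed.

Section Reduced.
Hypothesis units_trivial : forall u : H, is_unit H u -> u = mone H.

Lemma associated_iff_eq (x y : H) : associated H x y <-> x = y.
Proof.
  split.
  - intros [e [He ->]]; now rewrite (units_trivial e He), mop_one.
  - intros ->; apply associated_refl.
Qed.

Lemma fsame_iff_perm (z z' : list H) : fsame H z z' <-> Permutation z' z.
Proof.
  split; [|apply fsame_perm].
  intros [z'' [Hp Hz]]; replace z with z''; [exact Hp|]; clear Hp; symmetry.
  induction Hz as [|x y z z'' Hxy _ IH]; [reflexivity|].
  now rewrite (proj1 (associated_iff_eq x y) Hxy), IH.
Qed.

Lemma dist_count (eq_dec : forall x y : H, {x = y} + {x <> y}) y w n x :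
  dist H y w n ->
  count_occ eq_dec y x <= count_occ eq_dec w x + n /\
  count_occ eq_dec w x <= count_occ eq_dec y x + n.
Proof.
  intros [X [Y [Y' [Hy [Hw [_ ->]]]]]].
  apply fsame_iff_perm in Hy, Hw.
  rewrite <- (proj1 (Permutation_count_occ eq_dec _ _) Hy x),
    <- (proj1 (Permutation_count_occ eq_dec _ _) Hw x).
  rewrite !count_occ_app.
  pose proof (count_occ_bound eq_dec x Y); pose proof (count_occ_bound eq_dec x Y'); lia.
Qed.

Lemma factorization_replace (eq_dec : forall x y : H, {x = y} + {x <> y}) a z Y Y' :
  factorization H a z -> Forall (atom H) Y' ->
  (forall x, count_occ eq_dec Y x <= count_occ eq_dec z x) ->
  mprod H Y = mprod H Y' -> (forall v w, In v Y -> In w Y' -> v <> w) ->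
  exists z1, factorization H a z1 /\ dist H z z1 (Nat.max (length Y) (length Y')) /\
    forall x, count_occ eq_dec z1 x + count_occ eq_dec Y x =
              count_occ eq_dec z x + count_occ eq_dec Y' x.
Proof.
  intros Fz AY' Hsub EY Hdisj.
  destruct (count_occ_split eq_dec Y z Hsub) as [rest Hrest].
  destruct (factorization_exchange a z Y Y' rest Fz Hrest AY' EY) as [F1 D1].
  { intros v w Hv Hw; rewrite associated_iff_eq; eauto. }
  exists (Y' ++ rest); split; [exact F1|]; split; [exact D1|].
  intros x; rewrite (proj1 (Permutation_count_occ eq_dec _ _) Hrest x), !count_occ_app; lia.
Qed.

End Reduced.
End Monoid.

Fixpoint sum_below (f : nat -> nat) (n : nat) : nat :=
  match n with 0 => 0 | S n => sum_below f n + f n end.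

Lemma sum_below_ext f g n :
  (forall i, i < n -> f i = g i) -> sum_below f n = sum_below g n.
Proof. induction n; simpl; intros E; [reflexivity | rewrite IHn, E; auto]. Qed.

Lemma sum_below_add f g n :
  sum_below (fun i => f i + g i) n = sum_below f n + sum_below g n.
Proof. induction n; simpl; lia. Qed.

Lemma sum_below_le f g n :
  (forall i, i < n -> f i <= g i) -> sum_below f n <= sum_below g n.
Proof.
  induction n; simpl; intros Hle; [reflexivity|].
  specialize (IHn (fun i Hi => Hle i (Nat.lt_lt_succ_r _ _ Hi))); specialize (Hle n); lia.
Qed.

Lemma sum_below_lt f g n j : j < n ->
  (forall i, i < n -> f i <= g i) -> f j < g j -> sum_below f n < sum_below g n.
Proof.
  induction n; simpl; intros Hj Hle Hlt; [lia|].
  destruct (Nat.eq_dec j n) as [->|Hne].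
  - enough (sum_below f n <= sum_below g n) by lia.
    apply sum_below_le; intros; apply Hle; lia.
  - enough (sum_below f n < sum_below g n) by (specialize (Hle n); lia).
    apply IHn; auto; lia.
Qed.

Lemma sum_below_ge f n j : j < n -> f j <= sum_below f n.
Proof.
  induction n; simpl; intros Hj; [lia|].
  destruct (Nat.eq_dec j n) as [->|Hne]; [lia|].
  enough (f j <= sum_below f n) by lia. apply IHn; lia.
Qed.

Lemma mul_add_eq_lt d u w u' w' :
  1 <= d -> d * u + w = d * u' + w' -> w' < w -> u < u' /\ w' + d <= w.
Proof.
  intros Hd E Hw; destruct (le_lt_dec u' u) as [Hu|Hu].
  - assert (d * u' <= d * u) by (apply Nat.mul_le_mono_l; assumption); lia.
  - replace u' with (u + S (u' - S u)) in E by lia.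
    rewrite Nat.mul_add_distr_l, Nat.mul_succ_r in E; lia.
Qed.

Lemma mul_add_eq_cancel d u u' w : 1 <= d -> d * u + w = d * u' + w -> u = u'.
Proof. intros Hd E; apply (Nat.mul_cancel_l _ _ d); lia. Qed.

Definition eqmod (d a b : nat) : Prop := exists m n, a + d * m = b + d * n.

Lemma eqmod_refl d a : eqmod d a a.
Proof. now exists 0, 0. Qed.

Lemma eqmod_sym d a b : eqmod d a b -> eqmod d b a.
Proof. intros [m [n E]]; now exists n, m. Qed.

Lemma eqmod_trans d a b c : eqmod d a b -> eqmod d b c -> eqmod d a c.
Proof. intros [m [n E]] [m' [n' E']]; exists (m + m'), (n + n'); lia. Qed.

Lemma eqmod_add d a b a' b' : eqmod d a b -> eqmod d a' b' -> eqmod d (a + a') (b + b').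
Proof. intros [m [n E]] [m' [n' E']]; exists (m + m'), (n + n'); lia. Qed.

Lemma eqmod_sub d a b a' b' :
  eqmod d a b -> eqmod d a' b' -> a' <= a -> b' <= b -> eqmod d (a - a') (b - b').
Proof. intros [m [n E]] [m' [n' E']] ? ?; exists (m + n'), (n + m'); lia. Qed.

Lemma eqmod_mod_add d a b : d <> 0 -> eqmod d (a mod d + b) (a + b).
Proof. intros Hd; exists (a / d), 0; pose proof (Nat.div_mod_eq a d); lia. Qed.

Lemma eqmod_0_l d b : 1 <= d -> eqmod d 0 b -> b = 0 \/ d <= b.
Proof.
  intros Hd [m [n E]]; destruct b as [|b]; [now left|right].
  destruct (mul_add_eq_lt d n (S b) m 0); lia.
Qed.

Inductive kind := KU | KV | KW.

(* The atoms of the block monoid [{(a,b) in N^2 | a = b mod d}]. *)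
Definition block_atom (d : nat) (k : kind) : nat * nat :=
  match k with KU => (d, 0) | KV => (0, d) | KW => (1, 1) end.

Lemma block_atom_eqmod d k : eqmod d (fst (block_atom d k)) (snd (block_atom d k)).
Proof. destruct k; simpl; [exists 0, 1 | exists 1, 0 | exists 0, 0]; lia. Qed.

Lemma block_atom_nonzero d k : 1 <= d -> block_atom d k <> (0, 0).
Proof. destruct k; simpl; intros Hd E; inversion E; lia. Qed.

Lemma block_atom_irreducible d k a1 a2 b1 b2 : 2 <= d ->
  eqmod d a1 a2 -> eqmod d b1 b2 -> block_atom d k = (a1 + b1, a2 + b2) ->
  (a1, a2) = (0, 0) \/ (b1, b2) = (0, 0).
Proof.
  intros Hd Ha Hb E; destruct k; simpl in E; injection E as E1 E2.
  - assert (a2 = 0 /\ b2 = 0) as [-> ->] by lia.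
    destruct (eqmod_0_l d a1 ltac:(lia) (eqmod_sym _ _ _ Ha)) as [->|]; [now left|].
    right; f_equal; lia.
  - assert (a1 = 0 /\ b1 = 0) as [-> ->] by lia.
    destruct (eqmod_0_l d a2 ltac:(lia) Ha) as [->|]; [now left|].
    right; f_equal; lia.
  - destruct a1 as [|a1].
    + destruct (eqmod_0_l d a2 ltac:(lia) Ha) as [->|]; [now left | lia].
    + assert (b1 = 0) as -> by lia.
      destruct (eqmod_0_l d b2 ltac:(lia) Hb) as [->|]; [now right | lia].
Qed.

Lemma block_atom_below d a b : 2 <= d -> eqmod d a b -> (a, b) <> (0, 0) ->
  exists k, fst (block_atom d k) <= a /\ snd (block_atom d k) <= b.
Proof.
  intros Hd Hab Hne; destruct a as [|a], b as [|b]; [congruence| | |].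
  - destruct (eqmod_0_l d (S b)) as [|]; [lia | exact Hab | lia | now exists KV].
  - destruct (eqmod_0_l d (S a)) as [|]; [lia | now apply eqmod_sym | lia | now exists KU].
  - exists KW; simpl; lia.
Qed.

Section Construction.
Variable C : list nat.
Hypothesis C_ge2 : forall d, In d C -> 2 <= d.

Definition modulus (i : nat) : nat := nth i C 0.

Lemma modulus_ge2 i : i < length C -> 2 <= modulus i.
Proof. intros Hi; apply C_ge2, nth_In, Hi. Qed.

Lemma In_iff_modulus d : In d C <-> exists i, i < length C /\ modulus i = d.
Proof.
  split.
  - intros Hd; destruct (In_nth C d 0 Hd) as [i [Hi E]]; now exists i.
  - intros [i [Hi <-]]; now apply nth_In.
Qed.

(* [H] is the product of the block monoids of moduli [modulus i], [i < length C], realised as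
   functions [nat -> nat * nat] vanishing from [length C] on. *)
Definition admissible (f : nat -> nat * nat) : Prop :=
  (forall i, length C <= i -> f i = (0, 0)) /\
  (forall i, i < length C -> eqmod (modulus i) (fst (f i)) (snd (f i))).

Definition elt : Type := {f | admissible f}.
Definition coord (x : elt) : nat -> nat * nat := proj1_sig x.

Lemma elt_ext (x y : elt) : (forall i, coord x i = coord y i) -> x = y.
Proof.
  destruct x as [f Hf], y as [g Hg]; simpl; intros E.
  assert (f = g) as <- by now apply functional_extensionality.
  f_equal; apply proof_irrelevance.
Qed.

Lemma coord_out x i : length C <= i -> coord x i = (0, 0).
Proof. destruct x as [f [Hf Hf']]; apply Hf. Qed.

Lemma coord_eqmod x i :
  i < length C -> eqmod (modulus i) (fst (coord x i)) (snd (coord x i)).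
Proof. destruct x as [f [Hf' Hf]]; apply Hf. Qed.

Lemma truncate_admissible (F : nat -> nat * nat) :
  (forall i, i < length C -> eqmod (modulus i) (fst (F i)) (snd (F i))) ->
  admissible (fun i => if i <? length C then F i else (0, 0)).
Proof. intros HF; split; intros i Hi; destruct (Nat.ltb_spec i (length C)); auto; lia. Qed.

Definition make_elt F HF : elt := exist _ _ (truncate_admissible F HF).

Lemma coord_make_elt F HF i : i < length C -> coord (make_elt F HF) i = F i.
Proof. intros Hi; simpl; destruct (Nat.ltb_spec i (length C)); [reflexivity | lia]. Qed.

Definition pair_add (p q : nat * nat) : nat * nat := (fst p + fst q, snd p + snd q).

Lemma add_admissible (x y : elt) : admissible (fun i => pair_add (coord x i) (coord y i)).
Proof.
  split; intros i Hi; unfold pair_add.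
  - now rewrite !coord_out.
  - apply eqmod_add; now apply coord_eqmod.
Qed.

Definition add (x y : elt) : elt := exist _ _ (add_admissible x y).

Lemma zero_admissible : admissible (fun _ => (0, 0)).
Proof. split; intros; [reflexivity | apply eqmod_refl]. Qed.

Definition zero : elt := exist _ _ zero_admissible.

Lemma coord_add x y i : coord (add x y) i = pair_add (coord x i) (coord y i).
Proof. reflexivity. Qed.

Lemma coord_zero i : coord zero i = (0, 0).
Proof. reflexivity. Qed.

Ltac elt_eq := apply elt_ext; intros; rewrite ?coord_add, ?coord_zero; unfold pair_add;
  simpl; f_equal; lia.

Lemma add_assoc x y w : add x (add y w) = add (add x y) w.
Proof. elt_eq. Qed.

Lemma add_comm x y : add x y = add y x.
Proof. elt_eq. Qed.

Lemma add_0_l x : add zero x = x.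
Proof. apply elt_ext; intros i; rewrite coord_add; now destruct (coord x i). Qed.

Lemma add_0_r x : add x zero = x.
Proof. now rewrite add_comm, add_0_l. Qed.

Lemma add_cancel_l x y w : add x y = add x w -> y = w.
Proof.
  intros E; apply elt_ext; intros i.
  apply (f_equal (fun e => coord e i)) in E; rewrite !coord_add in E; unfold pair_add in E.
  destruct (coord y i), (coord w i); injection E; intros; f_equal; lia.
Qed.

Definition HC : CMon :=
  {| car := elt; mop := add; mone := zero;
     mop_assoc := add_assoc; mop_comm := add_comm; mop_one := add_0_l;
     mop_cancel := add_cancel_l |}.

Lemma eq_zero_iff x : x = zero <-> forall i, i < length C -> coord x i = (0, 0).
Proof.
  split; [now intros -> |].
  intros Hx; apply elt_ext; intros i; rewrite coord_zero.
  destruct (le_lt_dec (length C) i); [now apply coord_out | auto].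
Qed.

Lemma units_trivial (x : HC) : is_unit HC x -> x = mone HC.
Proof.
  intros [y Hy]; change (add x y = zero) in Hy; apply eq_zero_iff; intros i _.
  apply (f_equal (fun e => coord e i)) in Hy; rewrite coord_add in Hy.
  unfold pair_add in Hy; destruct (coord x i); injection Hy; intros; f_equal; lia.
Qed.

Lemma is_unit_iff (x : elt) : is_unit HC x <-> x = zero.
Proof. split; [apply units_trivial | intros ->; exists zero; apply add_0_l]. Qed.

Lemma add_sub (x y : elt) :
  (forall j, fst (coord y j) <= fst (coord x j) /\ snd (coord y j) <= snd (coord x j)) ->
  exists c, x = add y c.
Proof.
  intros Hle.
  set (F j := (fst (coord x j) - fst (coord y j), snd (coord x j) - snd (coord y j))).
  assert (HF : forall i, i < length C -> eqmod (modulus i) (fst (F i)) (snd (F i))).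
  { intros i Hi; apply eqmod_sub; try apply coord_eqmod; try apply Hle; assumption. }
  exists (make_elt F HF); apply elt_ext; intros i; rewrite coord_add.
  destruct (le_lt_dec (length C) i).
  - now rewrite !coord_out.
  - rewrite coord_make_elt; auto; unfold F, pair_add; destruct (Hle i).
    destruct (coord x i), (coord y i); simpl in *; f_equal; lia.
Qed.

Definition gen_coord (i : nat) (k : kind) (j : nat) : nat * nat :=
  if j =? i then block_atom (modulus i) k else (0, 0).

Lemma gen_coord_eqmod i k j :
  j < length C -> eqmod (modulus j) (fst (gen_coord i k j)) (snd (gen_coord i k j)).
Proof.
  intros _; unfold gen_coord; destruct (Nat.eqb_spec j i) as [->|_].
  - apply block_atom_eqmod.
  - apply eqmod_refl.
Qed.

Definition gen (i : nat) (k : kind) : elt := make_elt (gen_coord i k) (gen_coord_eqmod i k).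

Definition is_gen (x : elt) : Prop := exists i k, i < length C /\ x = gen i k.

Lemma coord_gen i k j : j < length C -> coord (gen i k) j = gen_coord i k j.
Proof. apply coord_make_elt. Qed.

Lemma gen_inj i k i' k' :
  i < length C -> i' < length C -> gen i k = gen i' k' -> i = i' /\ k = k'.
Proof.
  intros Hi Hi' E; apply (f_equal (fun e => coord e i)) in E.
  rewrite !coord_gen in E by assumption; unfold gen_coord in E; rewrite Nat.eqb_refl in E.
  pose proof (modulus_ge2 i Hi).
  destruct (Nat.eqb_spec i i') as [<-|Hne].
  - split; [reflexivity|]; destruct k, k'; simpl in E; inversion E; auto; lia.
  - exfalso; apply (block_atom_nonzero (modulus i) k); [lia | assumption].
Qed.

Lemma gen_not_unit i k : i < length C -> ~ is_unit HC (gen i k).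
Proof.
  intros Hi Hu; rewrite is_unit_iff, eq_zero_iff in Hu.
  specialize (Hu i Hi); rewrite coord_gen in Hu by assumption.
  unfold gen_coord in Hu; rewrite Nat.eqb_refl in Hu.
  apply (block_atom_nonzero (modulus i) k); [pose proof (modulus_ge2 i Hi); lia | assumption].
Qed.

Lemma atom_gen i k : i < length C -> atom HC (gen i k).
Proof.
  intros Hi; split; [now apply gen_not_unit|].
  intros x y E; change (gen i k = add x y) in E.
  assert (Hoff : forall j, j <> i -> coord x j = (0, 0) /\ coord y j = (0, 0)).
  { intros j Hj; destruct (le_lt_dec (length C) j); [now rewrite !coord_out|].
    apply (f_equal (fun e => coord e j)) in E.
    rewrite coord_add, coord_gen in E by assumption; unfold gen_coord, pair_add in E.
    destruct (Nat.eqb_spec j i); [contradiction|].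
    destruct (coord x j), (coord y j); simpl in E; injection E; split; f_equal; lia. }
  apply (f_equal (fun e => coord e i)) in E.
  rewrite coord_add, coord_gen in E by assumption; unfold gen_coord, pair_add in E.
  rewrite Nat.eqb_refl in E.
  destruct (block_atom_irreducible (modulus i) k _ _ _ _ (modulus_ge2 i Hi)
              (coord_eqmod x i Hi) (coord_eqmod y i Hi) E) as [Ex|Ey];
    [left | right]; rewrite is_unit_iff; apply eq_zero_iff; intros j _;
    (destruct (Nat.eq_dec j i) as [->|Hj];
     [now rewrite <- surjective_pairing in * | apply Hoff, Hj]).
Qed.

Lemma gen_divides x : x <> zero -> exists i k, i < length C /\ exists c, x = add (gen i k) c.
Proof.
  intros Hx.
  assert (exists i, i < length C /\ coord x i <> (0, 0)) as [i [Hi Hne]].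
  { apply NNPP; intros N; apply Hx, eq_zero_iff; intros i Hi.
    apply NNPP; intros Hne; apply N; eauto. }
  destruct (block_atom_below (modulus i) (fst (coord x i)) (snd (coord x i))
              (modulus_ge2 i Hi) (coord_eqmod x i Hi)) as [k Hk];
    [now rewrite <- surjective_pairing|].
  exists i, k; split; [assumption|]; apply add_sub; intros j.
  destruct (le_lt_dec (length C) j); [now rewrite !coord_out|].
  rewrite coord_gen by assumption; unfold gen_coord.
  destruct (Nat.eqb_spec j i) as [->|]; [assumption | simpl; lia].
Qed.

Lemma atom_iff_gen x : atom HC x <-> is_gen x.
Proof.
  split.
  - intros [Hnu Hat].
    assert (Hx : x <> zero) by (intros ->; apply Hnu, is_unit_iff; reflexivity).
    destruct (gen_divides x Hx) as [i [k [Hi [c ->]]]].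
    destruct (Hat _ _ eq_refl) as [Hu|Hu]; [now apply gen_not_unit in Hu|].
    apply is_unit_iff in Hu; subst c; rewrite add_0_r; now exists i, k.
  - intros [i [k [Hi ->]]]; now apply atom_gen.
Qed.

Lemma factorization_iff a z : factorization HC a z <-> Forall is_gen z /\ mprod HC z = a.
Proof.
  unfold factorization; rewrite (associated_iff_eq HC units_trivial).
  split; intros [Hz Ha]; split; auto; revert Hz; apply Forall_impl; apply atom_iff_gen.
Qed.

Definition elt_eq_dec (x y : elt) : {x = y} + {x <> y} := excluded_middle_informative (x = y).

Definition cnt (z : list elt) (j : nat) (k : kind) : nat := count_occ elt_eq_dec z (gen j k).

Definition kind_eqb (k k' : kind) : bool :=
  match k, k' with KU, KU | KV, KV | KW, KW => true | _, _ => false end.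

Lemma gen_eqb i k j k' : i < length C -> j < length C ->
  (if elt_eq_dec (gen i k) (gen j k') then 1 else 0) =
  (if andb (i =? j) (kind_eqb k k') then 1 else 0).
Proof.
  intros Hi Hj; destruct (elt_eq_dec (gen i k) (gen j k')) as [E|E].
  - apply gen_inj in E as [-> ->]; auto; rewrite Nat.eqb_refl; now destruct k'.
  - destruct (Nat.eqb_spec i j) as [->|]; [|reflexivity].
    destruct k, k'; simpl; auto; now contradiction E.
Qed.

Lemma cnt_cons_gen i k z j k' : i < length C -> j < length C ->
  cnt (gen i k :: z) j k' = (if andb (i =? j) (kind_eqb k k') then 1 else 0) + cnt z j k'.
Proof.
  intros Hi Hj; rewrite <- gen_eqb by assumption; unfold cnt; simpl.
  destruct (elt_eq_dec (gen i k) (gen j k')); lia.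
Qed.

Lemma cnt_nil j k : cnt [] j k = 0.
Proof. reflexivity. Qed.

Lemma cnt_repeat i k n j k' : i < length C -> j < length C ->
  cnt (repeat (gen i k) n) j k' = if andb (i =? j) (kind_eqb k k') then n else 0.
Proof.
  intros Hi Hj; induction n as [|n IH]; simpl.
  - now destruct (andb _ _).
  - rewrite cnt_cons_gen, IH by assumption; now destruct (andb _ _).
Qed.

Lemma cnt_perm z z' j k : Permutation z z' -> cnt z j k = cnt z' j k.
Proof. intros P; apply (Permutation_count_occ elt_eq_dec), P. Qed.

Lemma coord_mprod z j : Forall is_gen z -> j < length C ->
  coord (mprod HC z) j =
  (modulus j * cnt z j KU + cnt z j KW, modulus j * cnt z j KV + cnt z j KW).
Proof.
  intros Hz Hj; induction Hz as [|x z [i [k [Hi ->]]] Hz IH].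
  - rewrite !cnt_nil; simpl; f_equal; lia.
  - change (mprod HC (gen i k :: z)) with (add (gen i k) (mprod HC z)).
    rewrite coord_add, IH, coord_gen, !cnt_cons_gen by assumption.
    unfold gen_coord, pair_add; rewrite (Nat.eqb_sym j i).
    destruct (Nat.eqb_spec i j) as [->|]; [destruct k|]; simpl; f_equal; lia.
Qed.

Lemma perm_of_cnt z z' : Forall is_gen z -> Forall is_gen z' ->
  (forall j k, j < length C -> cnt z j k = cnt z' j k) -> Permutation z z'.
Proof.
  intros Hz Hz' E; apply (Permutation_count_occ elt_eq_dec); intros x.
  destruct (classic (is_gen x)) as [[i [k [Hi ->]]]|N]; [now apply E|].
  rewrite !(proj1 (count_occ_not_In elt_eq_dec _ x)); [reflexivity| |];
    intros Hin; apply N; [revert Hz' | revert Hz]; rewrite Forall_forall; auto.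
Qed.

Lemma coord_factorization a z j : factorization HC a z -> j < length C ->
  coord a j = (modulus j * cnt z j KU + cnt z j KW, modulus j * cnt z j KV + cnt z j KW).
Proof. intros [Hz <-]%factorization_iff Hj; now apply coord_mprod. Qed.

(* Two factorizations of one element agree in each block up to copies of the relation
   [u v = w^d]. *)
Lemma factorization_W_lt a z z' j :
  factorization HC a z -> factorization HC a z' -> j < length C ->
  cnt z j KW < cnt z' j KW ->
  cnt z' j KU < cnt z j KU /\ cnt z' j KV < cnt z j KV /\
  cnt z j KW + modulus j <= cnt z' j KW.
Proof.
  intros F F' Hj Hlt; pose proof (modulus_ge2 j Hj).
  pose proof (coord_factorization a z j F Hj) as E.
  rewrite (coord_factorization a z' j F' Hj) in E; injection E as EU EV.
  destruct (mul_add_eq_lt (modulus j) (cnt z' j KU) (cnt z' j KW) (cnt z j KU) (cnt z j KW));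
  destruct (mul_add_eq_lt (modulus j) (cnt z' j KV) (cnt z' j KW) (cnt z j KV) (cnt z j KW));
  lia.
Qed.

Lemma factorization_perm_of_W a z z' :
  factorization HC a z -> factorization HC a z' ->
  (forall j, j < length C -> cnt z j KW = cnt z' j KW) -> Permutation z z'.
Proof.
  intros F F' E; apply perm_of_cnt; [apply factorization_iff in F | apply factorization_iff in F'|];
    try tauto.
  intros j k Hj; pose proof (modulus_ge2 j Hj); specialize (E j Hj).
  pose proof (coord_factorization a z j F Hj) as V.
  rewrite (coord_factorization a z' j F' Hj), E in V; injection V as VU VV.
  destruct k; [| |exact E]; apply (mul_add_eq_cancel (modulus j) _ _ (cnt z' j KW)); lia.
Qed.

Lemma factorization_W_differ a z z' :
  factorization HC a z -> factorization HC a z' -> ~ Permutation z z' ->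
  exists j, j < length C /\ cnt z j KW <> cnt z' j KW.
Proof.
  intros F F' Np; apply NNPP; intros N; apply Np, (factorization_perm_of_W a); auto.
  intros j Hj; apply NNPP; eauto.
Qed.

Lemma count_le_of_cnt_le Y z : Forall is_gen Y ->
  (forall j k, j < length C -> cnt Y j k <= cnt z j k) ->
  forall x, count_occ elt_eq_dec Y x <= count_occ elt_eq_dec z x.
Proof.
  intros HY Hle x; destruct (classic (is_gen x)) as [[i [k [Hi ->]]]|N]; [now apply Hle|].
  rewrite (proj1 (count_occ_not_In elt_eq_dec _ x)); [lia|].
  intros Hin; apply N; revert HY; rewrite Forall_forall; auto.
Qed.

Lemma dist_W_gap a y w n j :
  factorization HC a y -> factorization HC a w -> dist HC y w n -> j < length C ->
  cnt y j KW <> cnt w j KW -> modulus j <= n.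
Proof.
  intros Fy Fw Hd Hj Hne.
  destruct (dist_count HC units_trivial elt_eq_dec y w n (gen j KW) Hd) as [B1 B2].
  change (cnt y j KW <= cnt w j KW + n) in B1; change (cnt w j KW <= cnt y j KW + n) in B2.
  destruct (proj1 (Nat.lt_gt_cases _ _) Hne) as [Hlt|Hlt].
  - destruct (factorization_W_lt a y w j Fy Fw Hj Hlt); lia.
  - destruct (factorization_W_lt a w y j Fw Fy Hj Hlt); lia.
Qed.

Lemma chain_W_gap a N z w j :
  chain HC a N z w -> factorization HC a z -> j < length C ->
  cnt z j KW <> cnt w j KW -> modulus j <= N.
Proof.
  intros Hch Fz Hj; apply (chain_gap HC (fun z => cnt z j KW) (modulus j) a N z w); auto.
  intros y y' n Fy Fy' Hd; now apply (dist_W_gap a y y' n j).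
Qed.

Lemma mprod_pair (u v : elt) : mprod HC [u; v] = add u v.
Proof. change (add u (add v zero) = add u v); now rewrite add_0_r. Qed.

Lemma Forall_gen_repeat j k n : j < length C -> Forall is_gen (repeat (gen j k) n).
Proof.
  intros Hj; apply Forall_forall; intros x Hx; apply repeat_spec in Hx as ->; now exists j, k.
Qed.

Lemma Forall_gen_UV j : j < length C -> Forall is_gen [gen j KU; gen j KV].
Proof. intros Hj; repeat constructor; eexists _, _; eauto. Qed.

Definition uv (j : nat) : elt := add (gen j KU) (gen j KV).

Lemma uv_eq_W j : j < length C -> uv j = mprod HC (repeat (gen j KW) (modulus j)).
Proof.
  intros Hj; apply elt_ext; intros i.
  destruct (le_lt_dec (length C) i); [now rewrite !coord_out|].
  unfold uv.
  rewrite coord_add, coord_mprod, !coord_gen, !cnt_repeat by auto using Forall_gen_repeat.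
  unfold gen_coord, pair_add; rewrite (Nat.eqb_sym j i).
  destruct (Nat.eqb_spec i j) as [->|]; simpl; f_equal; lia.
Qed.

Lemma UV_W_disjoint j v w : j < length C ->
  In v [gen j KU; gen j KV] -> In w (repeat (gen j KW) (modulus j)) -> v <> w.
Proof.
  intros Hj Hv Hw; apply repeat_spec in Hw as ->.
  destruct Hv as [<-|[<-|[]]]; intros E; apply gen_inj in E as [_ E]; auto; discriminate.
Qed.

Lemma cnt_UV j i k : j < length C -> i < length C ->
  cnt [gen j KU; gen j KV] i k = if (j =? i) then match k with KW => 0 | _ => 1 end else 0.
Proof.
  intros Hj Hi; rewrite !cnt_cons_gen, cnt_nil by assumption; now destruct (j =? i), k.
Qed.

Lemma exchange_UV_W a z j : factorization HC a z -> j < length C ->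
  1 <= cnt z j KU -> 1 <= cnt z j KV ->
  exists z1, factorization HC a z1 /\ dist HC z z1 (modulus j) /\
    forall i, i < length C -> cnt z1 i KW = cnt z i KW + (if i =? j then modulus j else 0).
Proof.
  intros Fz Hj HU HV; pose proof (modulus_ge2 j Hj).
  destruct (factorization_replace HC units_trivial elt_eq_dec a z
              [gen j KU; gen j KV] (repeat (gen j KW) (modulus j))) as [z1 [F1 [D1 E1]]].
  - exact Fz.
  - apply (Forall_impl _ (fun x => proj2 (atom_iff_gen x))), Forall_gen_repeat, Hj.
  - apply count_le_of_cnt_le; [now apply Forall_gen_UV|].
    intros i k Hi; rewrite cnt_UV by assumption.
    destruct (Nat.eqb_spec j i) as [<-|]; [destruct k|]; lia.
  - rewrite mprod_pair; now apply uv_eq_W.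
  - intros v w; now apply UV_W_disjoint.
  - exists z1; split; [exact F1|]; split.
    + now rewrite repeat_length, Nat.max_r in D1 by (simpl; lia).
    + intros i Hi; specialize (E1 (gen i KW)).
      change (cnt z1 i KW + cnt [gen j KU; gen j KV] i KW =
              cnt z i KW + cnt (repeat (gen j KW) (modulus j)) i KW) in E1.
      rewrite cnt_UV, cnt_repeat, (Nat.eqb_sym j i) in E1 by assumption.
      destruct (i =? j); simpl in E1; lia.
Qed.

Lemma exchange_W_UV a z j : factorization HC a z -> j < length C ->
  modulus j <= cnt z j KW ->
  exists z1, factorization HC a z1 /\ dist HC z z1 (modulus j) /\
    forall i, i < length C -> cnt z i KW = cnt z1 i KW + (if i =? j then modulus j else 0).
Proof.
  intros Fz Hj HW; pose proof (modulus_ge2 j Hj).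
  destruct (factorization_replace HC units_trivial elt_eq_dec a z
              (repeat (gen j KW) (modulus j)) [gen j KU; gen j KV]) as [z1 [F1 [D1 E1]]].
  - exact Fz.
  - apply (Forall_impl _ (fun x => proj2 (atom_iff_gen x))), Forall_gen_UV, Hj.
  - apply count_le_of_cnt_le; [now apply Forall_gen_repeat|].
    intros i k Hi; rewrite cnt_repeat by assumption.
    destruct (Nat.eqb_spec j i) as [<-|]; [destruct k|]; simpl; lia.
  - rewrite mprod_pair; symmetry; now apply uv_eq_W.
  - intros v w Hv Hw E; subst; eapply UV_W_disjoint; eauto.
  - exists z1; split; [exact F1|]; split.
    + now rewrite repeat_length, Nat.max_l in D1 by (simpl; lia).
    + intros i Hi; specialize (E1 (gen i KW)).
      change (cnt z1 i KW + cnt (repeat (gen j KW) (modulus j)) i KW =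
              cnt z i KW + cnt [gen j KU; gen j KV] i KW) in E1.
      rewrite cnt_UV, cnt_repeat, (Nat.eqb_sym j i) in E1 by assumption.
      destruct (i =? j); simpl in E1; lia.
Qed.

Definition W_gap (z z' : list elt) : nat :=
  sum_below (fun j => (cnt z j KW - cnt z' j KW) + (cnt z' j KW - cnt z j KW)) (length C).

Lemma W_gap_lt z z1 z' j : j < length C ->
  (forall i, i < length C -> i <> j -> cnt z1 i KW = cnt z i KW) ->
  (cnt z1 j KW - cnt z' j KW) + (cnt z' j KW - cnt z1 j KW) <
  (cnt z j KW - cnt z' j KW) + (cnt z' j KW - cnt z j KW) ->
  W_gap z1 z' < W_gap z z'.
Proof.
  intros Hj Hoff Hlt; apply (sum_below_lt _ _ _ j Hj); [|exact Hlt].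
  intros i Hi; destruct (Nat.eq_dec i j) as [->|Hne]; [lia | now rewrite Hoff].
Qed.

Lemma exchange_toward a z z' j :
  factorization HC a z -> factorization HC a z' -> j < length C ->
  cnt z j KW <> cnt z' j KW ->
  exists z1, factorization HC a z1 /\ dist HC z z1 (modulus j) /\ W_gap z1 z' < W_gap z z' /\
    forall i, i < length C -> i <> j -> cnt z1 i KW = cnt z i KW.
Proof.
  intros Fz Fz' Hj Hne; pose proof (modulus_ge2 j Hj).
  destruct (proj1 (Nat.lt_gt_cases _ _) Hne) as [Hlt|Hlt].
  - destruct (factorization_W_lt a z z' j Fz Fz' Hj Hlt) as [HU [HV HW]].
    destruct (exchange_UV_W a z j Fz Hj ltac:(lia) ltac:(lia)) as [z1 [F1 [D1 E1]]].
    assert (Hoff : forall i, i < length C -> i <> j -> cnt z1 i KW = cnt z i KW).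
    { intros i Hi Hij; rewrite E1 by assumption; apply Nat.eqb_neq in Hij; rewrite Hij; lia. }
    exists z1; split; [exact F1|]; split; [exact D1|]; split; [|exact Hoff].
    apply (W_gap_lt z z1 z' j Hj Hoff).
    rewrite E1, Nat.eqb_refl by assumption; lia.
  - destruct (factorization_W_lt a z' z j Fz' Fz Hj Hlt) as [HU [HV HW]].
    destruct (exchange_W_UV a z j Fz Hj ltac:(lia)) as [z1 [F1 [D1 E1]]].
    assert (Hoff : forall i, i < length C -> i <> j -> cnt z1 i KW = cnt z i KW).
    { intros i Hi Hij; rewrite E1 by assumption; apply Nat.eqb_neq in Hij; rewrite Hij; lia. }
    exists z1; split; [exact F1|]; split; [exact D1|]; split; [|exact Hoff].
    apply (W_gap_lt z z1 z' j Hj Hoff).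
    specialize (E1 j Hj); rewrite Nat.eqb_refl in E1; lia.
Qed.

Lemma chain_W_close a N z z' :
  factorization HC a z -> factorization HC a z' ->
  (forall j, j < length C -> cnt z j KW <> cnt z' j KW -> modulus j <= N) ->
  chain HC a N z z'.
Proof.
  remember (W_gap z z') as m eqn:Hm; revert z Hm.
  induction m as [m IH] using lt_wf_ind; intros z -> Fz Fz' HN.
  destruct (classic (exists j, j < length C /\ cnt z j KW <> cnt z' j KW))
    as [[j [Hj Hne]]|Hsame].
  - destruct (exchange_toward a z z' j Fz Fz' Hj Hne) as [z1 [F1 [D1 [Hlt Hoff]]]].
    apply chain_trans with z1; [now apply (chain_single HC a N z z1 (modulus j)), HN|].
    apply (IH (W_gap z1 z') Hlt z1); auto.
    intros i Hi Hne'; apply HN; [assumption|].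
    destruct (Nat.eq_dec i j) as [->|Hij]; [assumption | now rewrite <- Hoff].
  - apply (chain_single HC a N z z' 0); [assumption | | lia].
    apply dist_perm, (factorization_perm_of_W a); auto.
    intros j Hj; apply NNPP; eauto.
Qed.

Lemma chain_iff a N z z' : factorization HC a z -> factorization HC a z' ->
  chain HC a N z z' <-> forall j, j < length C -> cnt z j KW <> cnt z' j KW -> modulus j <= N.
Proof.
  intros Fz Fz'; split.
  - intros Hch j; now apply (chain_W_gap a N z z').
  - now apply chain_W_close.
Qed.

Lemma coord_uv i j : i < length C -> j < length C ->
  coord (uv i) j = if j =? i then (modulus i, modulus i) else (0, 0).
Proof.
  intros Hi Hj; unfold uv; rewrite coord_add, !coord_gen by assumption.
  unfold gen_coord, pair_add; destruct (j =? i); simpl; f_equal; lia.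
Qed.

Lemma factorization_uv_off i z j k : i < length C -> j < length C -> j <> i ->
  factorization HC (uv i) z -> cnt z j k = 0.
Proof.
  intros Hi Hj Hji F; pose proof (modulus_ge2 j Hj).
  pose proof (coord_factorization _ z j F Hj) as E.
  rewrite coord_uv, (proj2 (Nat.eqb_neq j i) Hji) in E by assumption; injection E as EU EV.
  destruct k; nia.
Qed.

Lemma factorization_uv i z : i < length C ->
  factorization HC (uv i) z <->
  Permutation z [gen i KU; gen i KV] \/ Permutation z (repeat (gen i KW) (modulus i)).
Proof.
  intros Hi; pose proof (modulus_ge2 i Hi); split.
  - intros F; assert (Gz : Forall is_gen z) by (apply factorization_iff in F; tauto).
    pose proof (coord_factorization _ z i F Hi) as E.
    rewrite coord_uv, Nat.eqb_refl in E by assumption; injection E as EU EV.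
    assert (cnt z i KU = cnt z i KV)
      by (apply (mul_add_eq_cancel (modulus i) _ _ (cnt z i KW)); lia).
    destruct (cnt z i KU) as [|[|n]] eqn:HU; [right | left | exfalso; nia];
      (apply perm_of_cnt; [assumption | auto using Forall_gen_repeat, Forall_gen_UV |]);
      intros j k Hj; rewrite ?cnt_repeat, ?cnt_UV by assumption;
      (destruct (Nat.eqb_spec i j) as [<-|Hij];
       [destruct k; simpl; lia | now apply (factorization_uv_off i z j k)]).
  - intros [P|P]; apply factorization_iff; rewrite (mprod_perm HC _ _ P);
      (split; [apply (Permutation_Forall (Permutation_sym P));
               auto using Forall_gen_UV, Forall_gen_repeat|]).
    + apply mprod_pair.
    + symmetry; now apply uv_eq_W.
Qed.

Lemma in_L_uv i l : i < length C -> in_L HC (uv i) l <-> l = 2 \/ l = modulus i.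
Proof.
  intros Hi; split.
  - intros [z [F <-]]; apply factorization_uv in F as [P|P]; auto;
      apply Permutation_length in P; rewrite P; [left | right]; auto using repeat_length.
  - intros [->| ->]; [exists [gen i KU; gen i KV] | exists (repeat (gen i KW) (modulus i))];
      (split; [apply factorization_uv; auto | auto using repeat_length]).
Qed.

Lemma uv_W_differ i : i < length C ->
  cnt [gen i KU; gen i KV] i KW <> cnt (repeat (gen i KW) (modulus i)) i KW.
Proof.
  intros Hi; pose proof (modulus_ge2 i Hi).
  rewrite cnt_UV, cnt_repeat, Nat.eqb_refl by assumption; simpl; lia.
Qed.

Lemma not_fsame_uv i : i < length C ->
  ~ fsame HC [gen i KU; gen i KV] (repeat (gen i KW) (modulus i)).
Proof.
  intros Hi P; apply (fsame_iff_perm HC units_trivial), (cnt_perm _ _ i KW) in P.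
  now apply (uv_W_differ i).
Qed.

Lemma dist_uv i : i < length C ->
  dist HC [gen i KU; gen i KV] (repeat (gen i KW) (modulus i)) (modulus i).
Proof.
  intros Hi; pose proof (modulus_ge2 i Hi).
  exists [], [gen i KU; gen i KV], (repeat (gen i KW) (modulus i)); simpl app.
  split; [apply fsame_perm; reflexivity|]; split; [apply fsame_perm; reflexivity|]; split.
  - intros v w Hv Hw E; apply (associated_iff_eq HC units_trivial) in E.
    now apply (UV_W_disjoint i v w).
  - rewrite repeat_length; symmetry; apply Nat.max_r; simpl; lia.
Qed.

Lemma in_R_iff d : in_R HC d <-> In d C.
Proof.
  split.
  - intros [Hd2 [a [z [z' [Fz [Fz' [_ [Hdist Hnch]]]]]]]].
    rewrite (chain_iff a _ z z' Fz Fz') in Hnch.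
    apply NNPP; intros N; apply Hnch; intros j Hj Hne.
    pose proof (dist_W_gap a z z' d j Fz Fz' Hdist Hj Hne).
    enough (modulus j <> d) by lia.
    intros E; apply N, In_iff_modulus; eauto.
  - intros Hin; apply In_iff_modulus in Hin as [i [Hi <-]].
    split; [now apply modulus_ge2|].
    exists (uv i), [gen i KU; gen i KV], (repeat (gen i KW) (modulus i)).
    assert (F : factorization HC (uv i) [gen i KU; gen i KV]) by (apply factorization_uv; auto).
    assert (F' : factorization HC (uv i) (repeat (gen i KW) (modulus i)))
      by (apply factorization_uv; auto).
    do 2 (split; [assumption|]); split; [now apply not_fsame_uv|]; split; [now apply dist_uv|].
    rewrite (chain_iff _ _ _ _ F F'); intros Hch.
    pose proof (Hch i Hi (uv_W_differ i Hi)); pose proof (modulus_ge2 i Hi); lia.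
Qed.

Lemma in_Ca_iff d : in_Ca HC d <-> In d C.
Proof.
  split.
  - intros [a [[z0 [z0' [F0 [F0' Hdiff]]]] [Hall Hmin]]].
    rewrite (fsame_iff_perm HC units_trivial) in Hdiff.
    destruct (factorization_W_differ a z0 z0' F0 F0') as [j0 [Hj0 Hne0]];
      [intros P; apply Hdiff, Permutation_sym, P|].
    assert (modulus j0 <= d)
      by (apply (chain_iff a d z0 z0' F0 F0'); auto).
    pose proof (modulus_ge2 j0 Hj0).
    apply NNPP; intros N.
    enough (d <= d - 1) by lia.
    apply Hmin; intros z z' Fz Fz'; apply (chain_iff a _ z z' Fz Fz').
    intros j Hj Hne; pose proof (proj1 (chain_iff a d z z' Fz Fz') (Hall z z' Fz Fz') j Hj Hne).
    enough (modulus j <> d) by lia.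
    intros E; apply N, In_iff_modulus; eauto.
  - intros Hin; apply In_iff_modulus in Hin as [i [Hi <-]].
    assert (F : factorization HC (uv i) [gen i KU; gen i KV]) by (apply factorization_uv; auto).
    assert (F' : factorization HC (uv i) (repeat (gen i KW) (modulus i)))
      by (apply factorization_uv; auto).
    exists (uv i); split;
      [exists [gen i KU; gen i KV], (repeat (gen i KW) (modulus i)); auto using not_fsame_uv|].
    split.
    + intros z z' Fz Fz'; apply (chain_iff _ _ z z' Fz Fz'); intros j Hj Hne.
      destruct (Nat.eq_dec j i) as [->|Hji]; [reflexivity|].
      now rewrite !(factorization_uv_off i _ j KW) in Hne.
    + intros M HM; apply (proj1 (chain_iff _ M _ _ F F') (HM _ _ F F') i Hi), uv_W_differ, Hi.
Qed.

Lemma atom_pair_exceptional u v z : is_gen u -> is_gen v ->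
  factorization HC (add u v) z -> ~ Permutation z [u; v] ->
  exists i, i < length C /\ add u v = uv i.
Proof.
  intros Gu Gv Fz Np.
  assert (F0 : factorization HC (add u v) [u; v])
    by (apply factorization_iff; split; [repeat constructor; auto | apply mprod_pair]).
  destruct (factorization_W_differ _ z [u; v] Fz F0 Np) as [j [Hj Hne]].
  destruct Gu as [i1 [k1 [Hi1 ->]]], Gv as [i2 [k2 [Hi2 ->]]].
  exists j; split; [assumption|]; pose proof (modulus_ge2 j Hj).
  destruct (proj1 (Nat.lt_gt_cases _ _) Hne) as [Hlt|Hlt].
  - destruct (factorization_W_lt _ z _ j Fz F0 Hj Hlt) as [_ [_ HW]].
    rewrite !cnt_cons_gen, cnt_nil in HW by assumption.
    destruct (Nat.eqb_spec i1 j), (Nat.eqb_spec i2 j), k1, k2; simpl in HW; try lia; subst.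
    rewrite uv_eq_W by assumption; replace (modulus j) with 2 by lia.
    symmetry; apply mprod_pair.
  - destruct (factorization_W_lt _ _ z j F0 Fz Hj Hlt) as [HU [HV _]].
    rewrite !cnt_cons_gen, cnt_nil in HU, HV by assumption.
    destruct (Nat.eqb_spec i1 j), (Nat.eqb_spec i2 j), k1, k2; simpl in HU, HV; try lia; subst;
      [reflexivity | apply add_comm].
Qed.

Lemma in_daleth_star_iff d : in_daleth_star HC d <-> In d C /\ d <> 2.
Proof.
  split.
  - intros [u [v [Au [Av [_ [[z [Fz <-]] [Hd _]]]]]]].
    apply atom_iff_gen in Au, Av.
    destruct (atom_pair_exceptional u v z Au Av Fz) as [i [Hi E]];
      [intros P; now apply Permutation_length in P|].
    change (factorization HC (add u v) z) in Fz; rewrite E in Fz.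
    destruct (proj1 (in_L_uv i (length z) Hi) (ex_intro _ z (conj Fz eq_refl))) as [|E'];
      [contradiction|].
    split; [apply In_iff_modulus; eauto | assumption].
  - intros [Hin Hd2]; apply In_iff_modulus in Hin as [i [Hi <-]].
    exists (gen i KU), (gen i KV); split; [now apply atom_gen|]; split; [now apply atom_gen|].
    change (mop HC (gen i KU) (gen i KV)) with (uv i).
    assert (L2 : in_L HC (uv i) 2) by (apply in_L_uv; auto).
    assert (Ld : in_L HC (uv i) (modulus i)) by (apply in_L_uv; auto).
    split; [exists 2, (modulus i); auto|]; split; [assumption|]; split; [assumption|].
    intros l Hl Hl2; apply in_L_uv in Hl as [->| ->]; [contradiction | reflexivity | assumption].
Qed.

Definition size (x : elt) : nat :=
  sum_below (fun i => fst (coord x i) + snd (coord x i)) (length C).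

Lemma size_add x y : size (add x y) = size x + size y.
Proof.
  unfold size; rewrite <- sum_below_add; apply sum_below_ext; intros i _.
  rewrite coord_add; unfold pair_add; simpl; lia.
Qed.

Lemma size_gen i k : i < length C -> 1 <= size (gen i k).
Proof.
  intros Hi; unfold size; eapply Nat.le_trans; [|apply (sum_below_ge _ _ i Hi)]; cbv beta.
  rewrite coord_gen by assumption; unfold gen_coord; rewrite Nat.eqb_refl.
  pose proof (modulus_ge2 i Hi); destruct k; simpl; lia.
Qed.

Lemma factorization_exists (a : elt) : exists z, Forall is_gen z /\ mprod HC z = a.
Proof.
  remember (size a) as n eqn:Hn; revert a Hn.
  induction n as [n IH] using lt_wf_ind; intros a ->.
  destruct (classic (a = zero)) as [->|Ha]; [now exists []|].
  destruct (gen_divides a Ha) as [i [k [Hi [c ->]]]].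
  destruct (IH (size c)) with c as [z [Gz Ez]];
    [rewrite size_add; pose proof (size_gen i k Hi); lia | reflexivity |].
  exists (gen i k :: z); split; [constructor; [now exists i, k | assumption]|].
  change (add (gen i k) (mprod HC z) = add (gen i k) c); now rewrite Ez.
Qed.

Lemma finitely_generated_HC : finitely_generated HC.
Proof.
  exists (flat_map (fun i => [gen i KU; gen i KV; gen i KW]) (seq 0 (length C))).
  intros a; destruct (factorization_exists a) as [z [Gz Ez]].
  exists z; split; [|symmetry; assumption].
  revert Gz; apply Forall_impl; intros x [i [k [Hi ->]]].
  apply in_flat_map; exists i; split; [apply in_seq; lia | destruct k; simpl; tauto].
Qed.

(* The divisor theory is the inclusion of [H] into [N^(2 |C|)]: the prime [(i, true)]
   (resp. [(i, false)]) reads the first (resp. second) component of block [i]. *)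
Definition prime_index : Type := {p : nat * bool | fst p < length C}.

Definition phi (x : elt) (p : prime_index) : nat :=
  let q := proj1_sig p in if snd q then fst (coord x (fst q)) else snd (coord x (fst q)).

Definition prime_index_of (q : nat * bool) : list prime_index :=
  match lt_dec (fst q) (length C) with left h => [exist _ q h] | right _ => [] end.

Lemma fin_supp_prime_index (f : prime_index -> nat) : fin_supp f.
Proof.
  exists (flat_map prime_index_of (list_prod (seq 0 (length C)) [true; false])).
  intros [[i b] h] _; apply in_flat_map; exists (i, b); split.
  - apply in_prod; [apply in_seq; simpl in h; lia | destruct b; simpl; tauto].
  - unfold prime_index_of; destruct (lt_dec (fst (i, b)) (length C)); [|contradiction].
    left; f_equal; apply proof_irrelevance.
Qed.

(* [at_index f i b] is [f (i, b)], with junk value [0] for [i >= length C]. *)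
Definition at_index (f : prime_index -> nat) (i : nat) (b : bool) : nat :=
  match lt_dec i (length C) with left h => f (exist _ (i, b) h) | right _ => 0 end.

Lemma at_index_eq f i b h : at_index f i b = f (exist _ (i, b) h).
Proof.
  unfold at_index; destruct (lt_dec i (length C)); [|contradiction].
  do 2 f_equal; apply proof_irrelevance.
Qed.

Definition lift_fst (f : prime_index -> nat) (i : nat) : nat * nat :=
  (at_index f i true, at_index f i true + modulus i * at_index f i false).

Definition lift_snd (f : prime_index -> nat) (i : nat) : nat * nat :=
  (at_index f i false + modulus i * at_index f i true, at_index f i false).

Lemma lift_fst_eqmod f i : i < length C ->
  eqmod (modulus i) (fst (lift_fst f i)) (snd (lift_fst f i)).
Proof. intros _; exists (at_index f i false), 0; simpl; lia. Qed.

Lemma lift_snd_eqmod f i : i < length C ->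
  eqmod (modulus i) (fst (lift_snd f i)) (snd (lift_snd f i)).
Proof. intros _; exists 0, (at_index f i true); simpl; lia. Qed.

(* [f] is the gcd of these two elements: each is exact on one half of the primes. *)
Definition gcd_witnesses (f : prime_index -> nat) : list elt :=
  [make_elt (lift_fst f) (lift_fst_eqmod f); make_elt (lift_snd f) (lift_snd_eqmod f)].

Lemma phi_gcd_witnesses f : forall a, In a (gcd_witnesses f) -> forall p, f p <= phi a p.
Proof.
  intros a Ha [[i b] h]; simpl in h; unfold phi; simpl.
  pose proof (modulus_ge2 i h); rewrite <- (at_index_eq f i b h).
  destruct Ha as [<-|[<-|[]]]; rewrite coord_make_elt by assumption;
    unfold lift_fst, lift_snd; destruct b; simpl; nia.
Qed.

Lemma phi_gcd_witnesses_exact f g :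
  (forall a, In a (gcd_witnesses f) -> forall p, g p <= phi a p) ->
  forall p, g p <= f p.
Proof.
  intros Hg [[i b] h]; simpl in h; rewrite <- (at_index_eq f i b h), <- (at_index_eq g i b h).
  destruct b; [specialize (Hg _ (or_introl eq_refl) (exist _ (i, true) h))
              | specialize (Hg _ (or_intror (or_introl eq_refl)) (exist _ (i, false) h))];
    unfold phi in Hg; cbn [proj1_sig fst snd] in Hg;
    rewrite coord_make_elt, <- at_index_eq in Hg; assumption.
Qed.

Lemma divisor_theory_phi : divisor_theory HC prime_index phi.
Proof.
  split; [|split; [|split; [|split]]].
  - intros a; apply fin_supp_prime_index.
  - intros p; unfold phi; simpl; now destruct (snd _).
  - intros a b p; unfold phi; simpl; now destruct (snd _).
  - intros a b Hle; destruct (add_sub b a) as [c Hc]; [|now exists c].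
    intros j; destruct (le_lt_dec (length C) j); [now rewrite !coord_out|].
    split; [apply (Hle (exist _ (j, true) l)) | apply (Hle (exist _ (j, false) l))].
  - intros f _; exists (gcd_witnesses f); split; [discriminate|].
    split; [apply phi_gcd_witnesses|]; intros g _; apply phi_gcd_witnesses_exact.
Qed.

Fixpoint residue_vectors (n : nat) : list (nat -> nat) :=
  match n with
  | 0 => [fun _ => 0]
  | S n => flat_map (fun v => map (fun x i => if i =? n then x else v i) (seq 0 (modulus n)))
             (residue_vectors n)
  end.

Lemma residue_vectors_complete n (c : nat -> nat) : (forall i, i < n -> c i < modulus i) ->
  exists v, In v (residue_vectors n) /\ forall i, i < n -> v i = c i.
Proof.
  induction n as [|n IH]; intros Hc; [exists (fun _ => 0); simpl; split; auto; lia|].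
  destruct IH as [v [Hv Ev]]; [intros; apply Hc; lia|].
  exists (fun i => if i =? n then c n else v i); split.
  - apply in_flat_map; exists v; split; [assumption|].
    apply in_map_iff; exists (c n); split; [reflexivity|]; apply in_seq; specialize (Hc n); lia.
  - intros i Hi; destruct (Nat.eqb_spec i n) as [->|]; [reflexivity | apply Ev; lia].
Qed.

(* The class group is [prod_i Z/(modulus i)]: the class of [f - g] is determined by the
   residue of [(g_false - g_true) - (f_false - f_true)] in each block. *)
Definition residue (f g : prime_index -> nat) (i : nat) : nat :=
  (at_index g i false + (modulus i - 1) * (at_index g i true + at_index f i false)
   + at_index f i true) mod modulus i.

Definition class_shift (f g : prime_index -> nat) (i : nat) : nat * nat :=
  (residue f g i + at_index g i true + at_index f i false + (modulus i - 1) * at_index f i true,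
   at_index g i false).

Lemma class_shift_eqmod f g i : i < length C ->
  eqmod (modulus i) (fst (class_shift f g i)) (snd (class_shift f g i)).
Proof.
  intros Hi; pose proof (modulus_ge2 i Hi); unfold class_shift, residue; cbn [fst snd].
  rewrite <- !Nat.add_assoc; eapply eqmod_trans; [apply eqmod_mod_add; lia|].
  exists 0, (at_index g i true + at_index f i false + at_index f i true).
  destruct (modulus i) as [|e]; [lia|]; simpl Nat.sub; rewrite Nat.sub_0_r; ring.
Qed.

Definition residue_rep (v : nat -> nat) : (prime_index -> nat) * (prime_index -> nat) :=
  (fun p : prime_index => if snd (proj1_sig p) then v (fst (proj1_sig p)) else 0,
   fun _ => 0).

Lemma class_group_finite_phi : class_group_finite HC prime_index phi.
Proof.
  exists (map residue_rep (residue_vectors (length C))); split.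
  - apply Forall_forall; intros; split; apply fin_supp_prime_index.
  - intros f g _ _.
    destruct (residue_vectors_complete (length C) (residue f g)) as [v [Hv Ev]].
    { intros i Hi; apply Nat.mod_upper_bound; pose proof (modulus_ge2 i Hi); lia. }
    exists (residue_rep v); split; [now apply in_map|].
    exists (make_elt (lift_snd f) (lift_snd_eqmod f)),
      (make_elt (class_shift f g) (class_shift_eqmod f g)).
    intros [[i b] h]; simpl in h; unfold phi, residue_rep; cbn [proj1_sig fst snd].
    rewrite !coord_make_elt by assumption; unfold lift_snd, class_shift; cbn [fst snd].
    rewrite <- !at_index_eq, Ev by assumption; pose proof (modulus_ge2 i h).
    destruct b; simpl; [|lia].
    destruct (modulus i) as [|e]; [lia|]; simpl Nat.sub; rewrite Nat.sub_0_r; simpl; lia.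
Qed.

Lemma krull_HC : krull_finite_class_group HC.
Proof.
  exists prime_index, phi; split; [apply divisor_theory_phi | apply class_group_finite_phi].
Qed.

End Construction.

Theorem proposition3p2 :
  forall C : list nat, C <> nil -> (forall d, In d C -> 2 <= d) ->
  exists H : CMon,
    finitely_generated H /\ krull_finite_class_group H /\
    (forall d, in_R H d <-> In d C) /\
    (forall d, in_Ca H d <-> In d C) /\
    (forall d, in_daleth_star H d <-> (In d C /\ d <> 2)).
Proof.
  intros C _ HC2; exists (HC C).
  split; [now apply finitely_generated_HC|]; split; [now apply krull_HC|].
  split; [|split]; intros d.
  - now apply in_R_iff.
  - now apply in_Ca_iff.
  - now apply in_daleth_star_iff.
Qed.
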